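(* For every $n\ge1$, the number of matrices $A\in\mathbb{R}^{n\times n}$ with all rows of Euclidean norm $1$ that maximize $\beta(A)$ over all such matrices is at most $2^{n\cdot 2^n}$.
   Context: For $A\in\mathbb{R}^{m\times n}$, $\beta(A)=\frac{1}{2^n}\sum_{x\in\{-1,1\}^n}\|Ax\|_\infty$. *)

From HB Require Import structures.
From mathcomp Require Import all_boot all_order all_algebra.
From mathcomp Require Import reals.
Set Implicit Arguments. Unset Strict Implicit. Unset Printing Implicit Defensive.
Import Order.TTheory GRing.Theory Num.Theory.
Local Open Scope ring_scope.

(* The sign vector x in {-1,1}^n encoded by f : {ffun 'I_n -> bool}
   (true |-> 1, false |-> -1); this is a bijection onto {-1,1}^n. *)
Definition signvec (R : realType) (n : nat) (f : {ffun 'I_n -> bool}) : 'cV[R]_n :=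
  \col_i (if f i then 1 else -1).

Definition infnorm (R : realType) (m : nat) (v : 'cV[R]_m) : R :=
  \big[Num.max/0]_(i < m) `|v i 0|.

Definition beta (R : realType) (m n : nat) (A : 'M[R]_(m, n)) : R :=
  (2 ^+ n)^-1 * \sum_(f : {ffun 'I_n -> bool}) infnorm (A *m signvec R f).

Definition unit_rows (R : realType) (m n : nat) (A : 'M[R]_(m, n)) : Prop :=
  forall i : 'I_m, Num.sqrt (\sum_(j < n) A i j ^+ 2) = 1.

Definition beta_maximizer (R : realType) (n : nat) (A : 'M[R]_n) : Prop :=
  unit_rows A /\ forall B : 'M[R]_n, unit_rows B -> beta B <= beta A.

From HB Require Import structures.
From mathcomp Require Import all_boot all_order all_algebra.
From mathcomp Require Import reals.
From mathcomp Require Import ring lra.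
Import Order.TTheory GRing.Theory Num.Theory.
Set Implicit Arguments. Unset Strict Implicit. Unset Printing Implicit Defensive.
Local Open Scope ring_scope.

(* Fix a maximizer A and a row i, and let m x be the largest |<A k, x>| over
   the other rows k.  Replacing row i by any unit vector b must not increase
   beta, i.e. b |-> \sum_x max |<b, x>| (m x) is maximized at b = A i.  The
   sign vectors x where <A i, x> is positive and attains the sup norm give a
   subgradient 2 u of this convex functional at A i, with u their sum; hence
   <b, u> <= <A i, u> for all unit b, which forces A i = u / |u| once u != 0.
   The set of such x is nonempty: otherwise the test rows sgn x / sqrt n show
   that the other rows satisfy \sum_(k != i) <A k, x>^2 >= n everywhere,
   contradicting Parseval.  So A is determined by n subsets of {-1,1}^n. *)

Lemma card_set (T : finType) : #|{set T}| = (2 ^ #|T|)%N.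
Proof. by rewrite -[LHS]cardsT -powersetT card_powerset cardsT. Qed.

Section Subgradient.
Variable R : realFieldType.

Lemma norm_le_of_not_peak (m d : R) : 0 <= m ->
  ~~ ((0 < d) && (m <= d)) -> ~~ ((0 < - d) && (m <= - d)) -> `|d| <= m.
Proof.
move=> m0; rewrite ler_norml oppr_gt0.
by case: (ltrP 0 d); case: (lerP m d); case: (lerP m (- d)) => //=; lra.
Qed.

Definition peak_gain (m d e : R) := if (0 < d) && (m <= d) then e - d else 0.

Lemma max_norm_subgradient (m d e : R) : 0 <= m ->
  Num.max `|d| m + (peak_gain m d e + peak_gain m (- d) (- e)) <= Num.max `|e| m.
Proof.
move=> m0; rewrite /peak_gain.
have e_le : `|e| <= Num.max `|e| m by rewrite le_max lexx.
have m_le : m <= Num.max `|e| m by rewrite le_max lexx orbT.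
have eN : - e <= `|e| by rewrite -normrN ler_norm.
have ee := ler_norm e.
case: ifPn => [/andP[d0 md]|Pd].
  rewrite oppr_gt0 ltNge (ltW d0) /= (ger0_norm (ltW d0)) (max_idPl md); lra.
case: ifPn => [/andP[d0 md]|Pnd].
  have d_neg : d < 0 by rewrite -oppr_gt0.
  rewrite (ltr0_norm d_neg) (max_idPl md); lra.
by rewrite (max_idPr (norm_le_of_not_peak m0 Pd Pnd)) !addr0.
Qed.

Lemma sum_max_norm_subgradient (T : finType) (s : T -> T) (m d e : T -> R) :
  involutive s -> (forall x, 0 <= m x) -> (forall x, m (s x) = m x) ->
  (forall x, d (s x) = - d x) -> (forall x, e (s x) = - e x) ->
  \sum_x Num.max `|d x| (m x) + 2 * \sum_(x | (0 < d x) && (m x <= d x)) (e x - d x)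
  <= \sum_x Num.max `|e x| (m x).
Proof.
move=> sK m_ge0 mS dS eS; pose g x := peak_gain (m x) (d x) (e x).
have -> : \sum_(x | (0 < d x) && (m x <= d x)) (e x - d x) = \sum_x g x.
  by rewrite big_mkcond.
have gS : \sum_x g (s x) = \sum_x g x by rewrite [RHS](reindex_inj (inv_inj sK)).
rewrite mulr_natl mulr2n -{2}gS -!big_split /=.
apply: ler_sum => x _; rewrite /g mS dS eS.
exact: max_norm_subgradient.
Qed.

End Subgradient.

Section BigMax.
Variable R : realFieldType.

Lemma bigmax_sqr_le_sum (I : Type) (r : seq I) (P : pred I) (F : I -> R) :
  (forall i, 0 <= F i) ->
  (\big[Num.max/0]_(i <- r | P i) F i) ^+ 2 <= \sum_(i <- r | P i) F i ^+ 2.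
Proof.
move=> F_ge0; suff [] : 0 <= \big[Num.max/0]_(i <- r | P i) F i /\
    (\big[Num.max/0]_(i <- r | P i) F i) ^+ 2 <= \sum_(i <- r | P i) F i ^+ 2 by [].
apply: (big_rec2 (fun m s => 0 <= m /\ m ^+ 2 <= s)); first by rewrite expr0n.
move=> i m s _ [m0 ms]; have Fi := F_ge0 i; split; first by rewrite le_max Fi.
have m2 : 0 <= m ^+ 2 by apply: sqr_ge0.
have F2 : 0 <= F i ^+ 2 by apply: sqr_ge0.
by case: (leP m (F i)) => _; lra.
Qed.

End BigMax.

Section SignCube.
Variables (R : realFieldType) (n : nat).
Local Notation cube := {ffun 'I_n -> bool}.

Definition sgn (x : cube) (j : 'I_n) : R := if x j then 1 else -1.

Definition dot (b : 'I_n -> R) (x : cube) : R := \sum_j b j * sgn x j.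

Definition sum_sgn (T : {set cube}) (j : 'I_n) : R := \sum_(x in T) sgn x j.

Definition negf (x : cube) : cube := [ffun j => ~~ x j].

Definition flip (j : 'I_n) (x : cube) : cube :=
  [ffun k => if k == j then ~~ x k else x k].

Lemma card_cube : #|cube| = (2 ^ n)%N.
Proof. by rewrite card_ffun card_bool card_ord. Qed.

Lemma sgn_mulss x j : sgn x j * sgn x j = 1.
Proof. by rewrite /sgn; case: (x j); rewrite ?mulrNN mulr1. Qed.

Lemma sum_sgn_sqr x : \sum_j sgn x j ^+ 2 = n%:R.
Proof.
by under eq_bigr do rewrite expr2 sgn_mulss; rewrite sumr_const card_ord.
Qed.

Lemma negfK : involutive negf.
Proof. by move=> x; apply/ffunP => j; rewrite !ffunE negbK. Qed.

Lemma flipK j : involutive (flip j).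
Proof. by move=> x; apply/ffunP => k; rewrite !ffunE; case: eqP; rewrite ?negbK. Qed.

Lemma dot_negf b x : dot b (negf x) = - dot b x.
Proof.
rewrite /dot -sumrN; apply: eq_bigr => j _; rewrite /sgn ffunE.
by case: (x j); rewrite /= ?mulrN1 ?mulr1 ?opprK.
Qed.

Lemma sum_sgn_mul j l :
  \sum_x sgn x j * sgn x l = (j == l)%:R * 2 ^+ n.
Proof.
have [<-|/negPf jl] := eqVneq j l.
  by under eq_bigr do rewrite sgn_mulss; rewrite sumr_const card_cube natrX mul1r.
rewrite mul0r; set S := \sum_x _.
suff : S = - S by lra.
rewrite {1}/S (reindex_inj (inv_inj (flipK j))) -sumrN.
apply: eq_bigr => x _; rewrite /sgn !ffunE eqxx eq_sym jl.
by case: (x j); case: (x l); rewrite /= ?mulr1 ?mul1r ?mulrN1 ?mulN1r ?opprK.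
Qed.

Lemma sum_dot_sqr a : \sum_x dot a x ^+ 2 = 2 ^+ n * \sum_j a j ^+ 2.
Proof.
have dot_sqr x : dot a x ^+ 2 = \sum_j \sum_l a j * a l * (sgn x j * sgn x l).
  rewrite expr2 /dot mulr_suml; apply: eq_bigr => j _; rewrite mulr_sumr.
  by apply: eq_bigr => l _; rewrite mulrACA.
under eq_bigr do rewrite dot_sqr.
rewrite exchange_big mulr_sumr; apply: eq_bigr => j _ /=.
rewrite exchange_big (bigD1 j) //= -mulr_sumr sum_sgn_mul eqxx mul1r.
rewrite big1 ?addr0 => [|l lj]; first by rewrite mulrC expr2.
by rewrite -mulr_sumr sum_sgn_mul eq_sym (negPf lj) mul0r mulr0.
Qed.

Lemma sum_dot (T : {set cube}) b :
  \sum_(x in T) dot b x = \sum_j b j * sum_sgn T j.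
Proof. by rewrite exchange_big; apply: eq_bigr => j _; rewrite mulr_sumr. Qed.

End SignCube.

Section UnitSphere.
Variables (R : rcfType) (I : finType).

Lemma unit_dot_argmax (a u : I -> R) :
  \sum_j a j ^+ 2 = 1 -> 0 < \sum_j a j * u j ->
  (forall b, \sum_j b j ^+ 2 = 1 -> \sum_j b j * u j <= \sum_j a j * u j) ->
  forall j, a j = u j / Num.sqrt (\sum_l u l ^+ 2).
Proof.
move=> a_unit au_gt0 a_max; set r := Num.sqrt _.
have sumsq_ge0 (v : I -> R) : 0 <= \sum_j v j ^+ 2.
  by apply: sumr_ge0 => j _; apply: sqr_ge0.
have u_neq0 : \sum_j u j ^+ 2 != 0.
  apply: contraTneq au_gt0 => u0.
  have {}u0 := psumr_eq0P (fun j _ => sqr_ge0 (u j)) u0.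
  rewrite big1 ?ltxx // => j _; have /eqP := u0 j isT.
  by rewrite sqrf_eq0 => /eqP ->; rewrite mulr0.
have r_sqr : r ^+ 2 = \sum_j u j ^+ 2 by rewrite sqr_sqrtr.
have r_gt0 : 0 < r by rewrite sqrtr_gt0 lt0r u_neq0 sumsq_ge0.
pose b j := u j / r.
have b_unit : \sum_j b j ^+ 2 = 1.
  by under eq_bigr do rewrite expr_div_n; rewrite -mulr_suml r_sqr divff.
have bu : \sum_j b j * u j = r.
  under eq_bigr do rewrite mulrAC -expr2.
  by rewrite -mulr_suml -r_sqr expr2 mulfK ?gt_eqF.
have dist_ab : \sum_j (a j - b j) ^+ 2 = 2 - 2 * ((\sum_j a j * u j) / r).
  have e j : (a j - b j) ^+ 2 = a j ^+ 2 + b j ^+ 2 - 2 * (a j * u j / r).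
    by rewrite /b; ring.
  under eq_bigr do rewrite e.
  by rewrite sumrB big_split /= a_unit b_unit -mulr_sumr -mulr_suml.
have dist_ab0 : \sum_j (a j - b j) ^+ 2 = 0.
  apply/eqP; rewrite eq_le sumsq_ge0 andbT dist_ab subr_le0.
  rewrite -ler_pdivrMl // mulVf ?pnatr_eq0 // ler_pdivlMr // mul1r -bu.
  exact: a_max.
move=> j; apply/eqP; rewrite -subr_eq0 -sqrf_eq0; apply/eqP.
exact: (psumr_eq0P (fun j _ => sqr_ge0 (a j - b j)) dist_ab0).
Qed.

End UnitSphere.

Section Maximizers.
Variables (R : realType) (n : nat).
Local Notation cube := {ffun 'I_n -> bool}.
Implicit Types (A : 'M[R]_n) (b : 'I_n -> R) (i : 'I_n) (x : cube).

Definition max_other_rows A i x : R := \big[Num.max/0]_(k | k != i) `|dot (A k) x|.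

Definition peak_set A i : {set cube} :=
  [set x | (0 < dot (A i) x) && (max_other_rows A i x <= dot (A i) x)].

Definition replace_row A i b : 'M[R]_n := \matrix_(k, j) if k == i then b j else A k j.

Lemma max_other_rows_ge0 A i x : 0 <= max_other_rows A i x.
Proof. exact: bigmax_ge_id. Qed.

Lemma max_other_rows_negf A i x : max_other_rows A i (negf x) = max_other_rows A i x.
Proof. by apply: eq_bigr => k _; rewrite dot_negf normrN. Qed.

Lemma max_other_rows_replace_row A i b x :
  max_other_rows (replace_row A i b) i x = max_other_rows A i x.
Proof.
apply: eq_bigr => k ki; congr `|_|; apply: eq_bigr => j _.
by rewrite mxE (negPf ki).
Qed.

Lemma mul_signvecE A x k : (A *m signvec R x) k 0 = dot (A k) x.
Proof. by rewrite !mxE; apply: eq_bigr => j _; rewrite mxE. Qed.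

Lemma infnorm_mul_signvec A i x :
  infnorm (A *m signvec R x) = Num.max `|dot (A i) x| (max_other_rows A i x).
Proof.
by rewrite /infnorm; under eq_bigr do rewrite mul_signvecE; rewrite (bigmaxD1 i).
Qed.

Lemma unit_rowsP A : unit_rows A <-> forall i, \sum_j A i j ^+ 2 = 1.
Proof.
have sq_ge0 i : 0 <= \sum_j A i j ^+ 2 by apply: sumr_ge0 => j _; apply: sqr_ge0.
split=> uA i; last by rewrite uA sqrtr1.
by rewrite -(sqr_sqrtr (sq_ge0 i)) uA expr1n.
Qed.

Lemma unit_rows_replace_row A i b :
  unit_rows A -> \sum_j b j ^+ 2 = 1 -> unit_rows (replace_row A i b).
Proof.
move=> /unit_rowsP uA b_unit; apply/unit_rowsP => k.
have [->|ki] := eqVneq k i.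
  by rewrite -b_unit; apply: eq_bigr => j _; rewrite mxE eqxx.
by rewrite -(uA k); apply: eq_bigr => j _; rewrite mxE (negPf ki).
Qed.

Lemma beta_maximizer_row A i b :
  beta_maximizer A -> \sum_j b j ^+ 2 = 1 ->
  \sum_x Num.max `|dot b x| (max_other_rows A i x)
  <= \sum_x Num.max `|dot (A i) x| (max_other_rows A i x).
Proof.
case=> uA A_max b_unit; have := A_max _ (unit_rows_replace_row i uA b_unit).
have dot_b x : dot (replace_row A i b i) x = dot b x.
  by apply: eq_bigr => j _; rewrite mxE eqxx.
rewrite /beta ler_pM2l ?invr_gt0 ?exprn_gt0 //.
under eq_bigr do rewrite (infnorm_mul_signvec _ i) max_other_rows_replace_row dot_b.
by under [X in _ <= X -> _]eq_bigr do rewrite (infnorm_mul_signvec _ i).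
Qed.

Lemma peak_set_dot_max A i b :
  beta_maximizer A -> \sum_j b j ^+ 2 = 1 ->
  \sum_j b j * sum_sgn R (peak_set A i) j <= \sum_j A i j * sum_sgn R (peak_set A i) j.
Proof.
move=> A_max b_unit; rewrite -!sum_dot.
have := sum_max_norm_subgradient (@negfK n) (max_other_rows_ge0 A i)
  (max_other_rows_negf A i) (dot_negf (A i)) (dot_negf b).
have := beta_maximizer_row i A_max b_unit.
have -> : \sum_(x | (0 < dot (A i) x) && (max_other_rows A i x <= dot (A i) x))
            (dot b x - dot (A i) x) = \sum_(x in peak_set A i) (dot b x - dot (A i) x).
  by apply: eq_bigl => x; rewrite inE.
rewrite sumrB; lra.
Qed.

Lemma max_other_rows_sqr A i x :
  max_other_rows A i x ^+ 2 <= \sum_(k | k != i) dot (A k) x ^+ 2.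
Proof.
under [X in _ <= X]eq_bigr do rewrite -(real_normK (num_real (dot (A _) x))).
exact: bigmax_sqr_le_sum.
Qed.

Lemma sum_other_rows_sqr A i : unit_rows A ->
  \sum_x \sum_(k | k != i) dot (A k) x ^+ 2 = 2 ^+ n * n.-1%:R.
Proof.
move=> /unit_rowsP A_unit; rewrite exchange_big /=.
under eq_bigr do rewrite sum_dot_sqr A_unit mulr1.
by rewrite sumr_const cardC1 card_ord mulr_natr.
Qed.

Lemma dim_le_max_other_rows_sqr A i x : beta_maximizer A ->
  (forall y, `|dot (A i) y| <= max_other_rows A i y) ->
  n%:R <= max_other_rows A i x ^+ 2.
Proof.
move=> A_max below; have n_gt0 : (0 < n)%N := leq_ltn_trans (leq0n i) (ltn_ord i).
set sn := Num.sqrt (n%:R : R).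
have sn_gt0 : 0 < sn by rewrite sqrtr_gt0 ltr0n.
have sn_sqr : sn ^+ 2 = n%:R by rewrite sqr_sqrtr ?ler0n.
suff sn_le : sn <= max_other_rows A i x by rewrite -sn_sqr; nra.
rewrite leNgt; apply/negP => lt_sn.
pose b j := sgn R x j / sn.
have b_unit : \sum_j b j ^+ 2 = 1.
  under eq_bigr do rewrite expr_div_n.
  by rewrite -mulr_suml sum_sgn_sqr -sn_sqr divff ?gt_eqF ?exprn_gt0.
have dot_bx : dot b x = sn.
  rewrite /dot; under eq_bigr do rewrite mulrAC -expr2.
  by rewrite -mulr_suml sum_sgn_sqr -sn_sqr expr2 mulfK ?gt_eqF.
have := beta_maximizer_row i A_max b_unit; apply/negP; rewrite -ltNge.
rewrite [X in X < _](bigD1 x) // [X in _ < X](bigD1 x) //=.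
rewrite (max_idPr (below x)) dot_bx (ger0_norm (ltW sn_gt0)) (max_idPl (ltW lt_sn)).
apply: ltr_leD lt_sn _; apply: ler_sum => y _.
by rewrite (max_idPr (below y)) le_max lexx orbT.
Qed.

Lemma peak_set_neq0 A i : beta_maximizer A -> peak_set A i != set0.
Proof.
move=> A_max; apply/negP => /eqP T0.
have below y : `|dot (A i) y| <= max_other_rows A i y.
  have not_peak z : z \notin peak_set A i by rewrite T0 inE.
  apply: norm_le_of_not_peak (max_other_rows_ge0 A i y) _ _.
    by have := not_peak y; rewrite inE.
  by have := not_peak (negf y); rewrite inE dot_negf max_other_rows_negf.
have : \sum_(x : cube) (n%:R : R) <= \sum_x \sum_(k | k != i) dot (A k) x ^+ 2.
  apply: ler_sum => x _; apply: le_trans (max_other_rows_sqr A i x).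
  exact: dim_le_max_other_rows_sqr.
rewrite (sum_other_rows_sqr i A_max.1) sumr_const card_cube.
rewrite -[_ *+ (2 ^ n)]mulr_natr natrX.
have n_gt0 : (0 < n)%N := leq_ltn_trans (leq0n i) (ltn_ord i).
have pred_n : n%:R = n.-1%:R + 1 :> R by rewrite natr1 prednK.
have pow_gt0 : 0 < 2 ^+ n :> R by rewrite exprn_gt0.
nra.
Qed.

Lemma beta_maximizer_rowE A i : beta_maximizer A ->
  forall j, A i j = sum_sgn R (peak_set A i) j /
                    Num.sqrt (\sum_l sum_sgn R (peak_set A i) l ^+ 2).
Proof.
move=> A_max; apply: unit_dot_argmax.
- exact: ((unit_rowsP A).1 A_max.1 i).
- have /set0Pn[x0 Tx0] := peak_set_neq0 i A_max.
  have peak_pos x : x \in peak_set A i -> 0 < dot (A i) x by rewrite inE => /andP[].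
  rewrite -sum_dot (bigD1 x0) //= ltr_wpDr ?peak_pos //.
  by apply: sumr_ge0 => x /andP[/peak_pos/ltW].
- by move=> b; apply: peak_set_dot_max.
Qed.

End Maximizers.

Theorem corollary3 (R : realType) (n : nat) (hn : (1 <= n)%N)
  (s : seq 'M[R]_n) :
  uniq s -> (forall A, A \in s -> beta_maximizer A) ->
  (size s <= 2 ^ (n * 2 ^ n))%N.
Proof.
move=> s_uniq s_max.
pose peak_sets (A : 'M[R]_n) : {ffun 'I_n -> {set {ffun 'I_n -> bool}}} :=
  [ffun i => peak_set A i].
have peak_sets_inj : {in s &, injective peak_sets}.
  move=> A B /s_max A_max /s_max B_max /ffunP eqAB; apply/matrixP => i j.
  have := eqAB i; rewrite !ffunE => eq_i.
  by rewrite (beta_maximizer_rowE i A_max) (beta_maximizer_rowE i B_max) eq_i.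
rewrite -(size_map peak_sets) -(card_uniqP _) ?map_inj_in_uniq //.
apply: leq_trans (max_card _) _.
by rewrite card_ffun card_set card_cube card_ord -expnM mulnC.
Qed.
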